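(* Let $n$ be even and let $v_0,\dots,v_{n+1}\in\mathbb{R}^n$ be hereditarily spanning. Then $dS(v_0,\dots,v_{n+1})=0$.
   Context: $\mathrm{Or}(v_1,\dots,v_n)=\operatorname{sign}\det(v_1,\dots,v_n)$ (zero if not a basis). Define $S:(\mathbb{R}^n)^{n+1}\to\{-1,0,1\}$ by $S(v_0,\dots,v_n)=0$ if $0$ is not in the interior of the convex hull of $v_0,\dots,v_n$, and otherwise $S(v_0,\dots,v_n)=(-1)^i\mathrm{Or}(v_0,\dots,\widehat{v_i},\dots,v_n)$ for any $i\in\{0,\dots,n\}$ (this is independent of $i$). A $k$-tuple ($k\ge n$) in $\mathbb{R}^n$ is hereditarily spanning if every $n$ of its elements span $\mathbb{R}^n$. $dS(v_0,\dots,v_{n+1})=\sum_{i=0}^{n+1}(-1)^iS(v_0,\dots,\widehat{v_i},\dots,v_{n+1})$. *)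

From HB Require Import structures.
From mathcomp Require Import all_boot all_order all_algebra.
From Stdlib Require Import ClassicalEpsilon.
Set Implicit Arguments. Unset Strict Implicit. Unset Printing Implicit Defensive.
Import Order.TTheory GRing.Theory Num.Theory.
Local Open Scope ring_scope.

Definition Or (R : realFieldType) (n : nat) (v : 'I_n -> 'rV[R]_n) : R :=
  Num.sg (\det (\matrix_(i < n, j < n) v i 0 j)).

Definition in_conv_hull (R : realFieldType) (n k : nat)
    (v : 'I_k -> 'rV[R]_n) (x : 'rV[R]_n) : Prop :=
  exists w : 'I_k -> R,
    [/\ forall i, 0 <= w i, \sum_(i < k) w i = 1 & x = \sum_(i < k) w i *: v i].

(* 0 is in the interior (standard topology of R^n, given by the max norm)
   of the convex hull of v_0, ..., v_{k-1}. *)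
Definition zero_in_interior_conv (R : realFieldType) (n k : nat)
    (v : 'I_k -> 'rV[R]_n) : Prop :=
  exists2 eps : R, 0 < eps &
    forall x : 'rV[R]_n, (forall j, `|x 0 j| < eps) -> in_conv_hull v x.

(* S(v_0,...,v_n) : 0 if 0 is not in the interior of the convex hull,
   otherwise (-1)^i Or(v_0,..,^v_i,..,v_n) with the choice i = 0. *)
Definition Sgn (R : realFieldType) (n : nat) (v : 'I_n.+1 -> 'rV[R]_n) : R :=
  if excluded_middle_informative (zero_in_interior_conv v) then Or (fun j => v (lift ord0 j)) else 0.

Definition dS (R : realFieldType) (n : nat) (v : 'I_n.+2 -> 'rV[R]_n) : R :=
  \sum_(i < n.+2) (-1) ^+ i * Sgn (fun j => v (lift i j)).

Definition hereditarily_spanning (R : realFieldType) (n k : nat)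
    (v : 'I_k -> 'rV[R]_n) : Prop :=
  forall f : 'I_n -> 'I_k, injective f ->
    row_full (\matrix_(i < n, j < n) v (f i) 0 j).

From HB Require Import structures.
From mathcomp Require Import all_boot all_order all_algebra ring lra zify.
From Stdlib Require Import ClassicalEpsilon.
Import Order.TTheory GRing.Theory Num.Theory.
Local Open Scope ring_scope.
Set Implicit Arguments. Unset Strict Implicit.

(* For n+1 vectors w_0,...,w_n of R^n in general position, Cramer's rule gives
   the linear relation  sum_k (-1)^k det(w without w_k) w_k = 0,  and it spans
   the (one-dimensional) space of relations.  Hence 0 lies in the interior of
   the convex hull of the w_k iff there is a relation with positive
   coefficients, iff all the signs (-1)^k det(w without w_k) agree; in that
   case S(w) is this common sign.

   For n+2 hereditarily spanning vectors the space of relations is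
   two-dimensional and a relation vanishing at two indices is trivial.
   Writing P(i) for "some relation vanishes at i and is positive elsewhere"
   (equivalently, S(v without v_i) != 0), a pivoting argument shows that
   P holds for no index or for exactly two indices i < k, and the two terms
   (-1)^i S(v without v_i) and (-1)^k S(v without v_k) of dS cancel. *)

Section Relations.
Variables (R : realFieldType) (m k : nat).

Lemma relation_comb (u : 'I_k -> 'rV[R]_m) (c d : 'I_k -> R) (a : R) :
  \sum_j c j *: u j = 0 -> \sum_j d j *: u j = 0 ->
  \sum_j (c j + a * d j) *: u j = 0.
Proof.
move=> hc hd; under eq_bigr => j _ do rewrite scalerDl -scalerA.
by rewrite big_split /= -scaler_sumr hc hd scaler0 addr0.
Qed.

Lemma sum_drop_zero (u : 'I_k.+1 -> 'rV[R]_m) (c : 'I_k.+1 -> R) (i : 'I_k.+1) :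
  c i = 0 -> \sum_j c j *: u j = \sum_r c (lift i r) *: u (lift i r).
Proof. by move=> ci; rewrite (bigD1_ord i) //= ci scale0r add0r. Qed.

Lemma sum_extend (u : 'I_k.+1 -> 'rV[R]_m) (l : 'I_k -> R) (i : 'I_k.+1) :
  \sum_j oapp l 0 (unlift i j) *: u j = \sum_r l r *: u (lift i r).
Proof.
rewrite (@sum_drop_zero _ _ i) ?unlift_none //.
by apply: eq_bigr => r _; rewrite liftK.
Qed.

End Relations.

Section Minors.
Variables (R : realFieldType) (n : nat).

Definition mat (u : 'I_n -> 'rV[R]_n) : 'M[R]_n := \matrix_(i, j) u i 0 j.

Lemma mul_row_mat (u : 'I_n -> 'rV[R]_n) (a : 'rV[R]_n) :
  a *m mat u = \sum_j a 0 j *: u j.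
Proof.
rewrite mulmx_sum_row; apply: eq_bigr => j _; congr (_ *: _).
by apply/rowP => l; rewrite !mxE.
Qed.

Lemma free_of_det (u : 'I_n -> 'rV[R]_n) (a : 'I_n -> R) :
  \det (mat u) != 0 -> \sum_j a j *: u j = 0 -> forall j, a j = 0.
Proof.
move=> hd hs j.
have hu : mat u \in unitmx by rewrite unitmxE unitfE.
have hA : \row_j a j *m mat u = 0.
  by rewrite mul_row_mat -[RHS]hs; apply: eq_bigr => k _; rewrite mxE.
have : \row_j a j = 0 :> 'rV_n by rewrite -(mulmxK hu (\row_j a j)) hA mul0mx.
by move/rowP/(_ j); rewrite !mxE.
Qed.

Definition minor_coef (w : 'I_n.+1 -> 'rV[R]_n) (k : 'I_n.+1) : R :=
  (-1) ^+ k * \det (mat (fun r => w (lift k r))).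

Lemma minor_coef_neq0 (w : 'I_n.+1 -> 'rV[R]_n) (k : 'I_n.+1) :
  \det (mat (fun r => w (lift k r))) != 0 -> minor_coef w k != 0.
Proof. by move=> h; rewrite /minor_coef mulf_neq0 // signr_eq0. Qed.

(* Cramer's relation: each coordinate of sum_k minor_coef w k *: w k is the
   Laplace expansion of a determinant with a repeated column. *)
Lemma minor_relation (w : 'I_n.+1 -> 'rV[R]_n) :
  \sum_k minor_coef w k *: w k = 0.
Proof.
apply/rowP => j0; rewrite summxE mxE.
pose B : 'M[R]_n.+1 := \matrix_(r, c) w r 0 (oapp id j0 (unlift ord0 c)).
have detB0 : \det B = 0.
  rewrite -det_tr; apply: (@determinant_alternate _ _ _ ord0 (lift ord0 j0)).
    by rewrite neq_lift.
  by move=> c; rewrite !mxE unlift_none liftK.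
rewrite -[RHS]detB0 (expand_det_col B ord0); apply: eq_bigr => r _.
rewrite mxE /cofactor /minor_coef addn0 !mxE unlift_none /= mulrC; congr (_ * _).
by congr (_ * \det _); apply/matrixP => i j; rewrite !mxE liftK.
Qed.

Lemma relation_proportional (w : 'I_n.+1 -> 'rV[R]_n) (c d : 'I_n.+1 -> R) :
  \det (mat (fun r => w (lift ord0 r))) != 0 ->
  \sum_k c k *: w k = 0 -> \sum_k d k *: w k = 0 -> d ord0 != 0 ->
  forall k, c k = c ord0 / d ord0 * d k.
Proof.
move=> hdet hc hd hd0; set al := c ord0 / d ord0.
have he : \sum_k (c k - al * d k) *: w k = 0.
  under eq_bigr => k _ do rewrite scalerBl -scalerA.
  by rewrite sumrB -scaler_sumr hc hd scaler0 subr0.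
rewrite big_ord_recl /al divfK // subrr scale0r add0r in he.
move=> k; case: (unliftP ord0 k) => [j ->|->]; last by rewrite /al divfK.
by apply/eqP; rewrite -subr_eq0; apply/eqP/(free_of_det hdet he).
Qed.

Lemma relation_minor_multiple (w : 'I_n.+1 -> 'rV[R]_n) (c : 'I_n.+1 -> R) :
  \det (mat (fun r => w (lift ord0 r))) != 0 -> \sum_k c k *: w k = 0 ->
  forall k, c k = c ord0 / minor_coef w ord0 * minor_coef w k.
Proof.
move=> hdet hc; apply: (relation_proportional hdet hc (minor_relation w)).
exact: minor_coef_neq0.
Qed.

End Minors.

Section Simplex.
Variables (R : realFieldType) (n : nat).

Lemma sum_ge_term (m : nat) (F : 'I_m -> R) j :
  (forall k, 0 <= F k) -> F j <= \sum_k F k.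
Proof. by move=> h; rewrite (bigD1 j) //= lerDl sumr_ge0. Qed.

Lemma pos_lower_bound (m : nat) (F : 'I_m -> R) :
  (forall k, 0 < F k) -> exists c, [/\ 0 < c, c <= 1 & forall k, c <= F k].
Proof.
move=> Fp; set Q := 1 + \sum_k (F k)^-1.
have Qk k : (F k)^-1 <= Q.
  by apply: ler_wpDl => //; apply: sum_ge_term => j; rewrite invr_ge0 ltW.
have Q1 : 1 <= Q by rewrite lerDl sumr_ge0 // => j _; rewrite invr_ge0 ltW.
have Qp : 0 < Q by apply: lt_le_trans Q1.
exists Q^-1; split; first by rewrite invr_gt0.
  by rewrite invr_le1 ?unitfE ?gt_eqF.
by move=> k; rewrite -[F k]invrK lef_pV2 ?Qk // posrE ?invr_gt0.
Qed.

Lemma mul_row_norm_bound (m : nat) (N : 'M[R]_m) (x : 'rV[R]_m) (e : R) :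
  (forall j, `|x 0 j| <= e) ->
  \sum_j `|(x *m N) 0 j| <= e * \sum_j \sum_i `|N i j|.
Proof.
move=> hx; rewrite mulr_sumr; apply: ler_sum => j _.
rewrite mxE mulr_sumr; apply: le_trans (ler_norm_sum _ _ _) _.
by apply: ler_sum => i _; rewrite normrM ler_wpM2r.
Qed.

Lemma normalize_pos_relation (k : nat) (w : 'I_k.+1 -> 'rV[R]_n) (l : 'I_k.+1 -> R) :
  (forall j, 0 < l j) -> \sum_j l j *: w j = 0 ->
  exists nu : 'I_k.+1 -> R,
    [/\ forall j, 0 < nu j, \sum_j nu j = 1 & \sum_j nu j *: w j = 0].
Proof.
move=> lp hl; set s := \sum_j l j.
have sp : 0 < s.
  by rewrite /s big_ord_recl ltr_pwDl // sumr_ge0 // => j _; apply/ltW.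
exists (fun j => l j / s); split.
- by move=> j; rewrite divr_gt0.
- by rewrite -mulr_suml divff // gt_eqF.
- under eq_bigr => j _ do rewrite mulrC -scalerA.
  by rewrite -scaler_sumr hl scaler0.
Qed.

(* If n+1 vectors, the last n of which form a basis, admit a positive
   relation, then 0 is an interior point of their convex hull: a small x is
   written in the basis, and the barycentric coordinates of 0 absorb the
   resulting coefficients. *)
Lemma interior_of_pos_relation (w : 'I_n.+1 -> 'rV[R]_n) (l : 'I_n.+1 -> R) :
  \det (mat (fun r => w (lift ord0 r))) != 0 ->
  (forall k, 0 < l k) -> \sum_k l k *: w k = 0 -> zero_in_interior_conv w.
Proof.
move=> hdet lp hl.
have [nu [nup nus nuw]] := normalize_pos_relation lp hl.
have [c [cp c1 cnu]] := pos_lower_bound nup.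
set M := mat (fun r => w (lift ord0 r)).
have hu : M \in unitmx by rewrite unitmxE unitfE.
set K := \sum_j \sum_i `|invmx M i j|.
have Kp : 0 <= K by rewrite sumr_ge0 // => j _; rewrite sumr_ge0.
have K1p : 0 < K + 1 by rewrite ltr_wpDl.
have ep : 0 < c / (2 * (K + 1)) by rewrite divr_gt0 // mulr_gt0.
exists (c / (2 * (K + 1))) => // x hx; set a := x *m invmx M.
set T := \sum_j `|a 0 j|.
have hT : T <= c / 2.
  apply: le_trans (mul_row_norm_bound _ (fun j => ltW (hx j))) _.
  have -> : c / 2 = c / (2 * (K + 1)) * (K + 1) by field; rewrite gt_eqF.
  by rewrite ler_wpM2l ?lerDl ?ltW.
have aT j : `|a 0 j| <= T by apply: sum_ge_term.
set s := \sum_j a 0 j.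
have sT : `|s| <= T by apply: ler_norm_sum.
pose mu k := (1 - s) * nu k + oapp (fun j => a 0 j) 0 (unlift ord0 k).
exists mu; split.
- have T0 : 0 <= T by apply: le_trans sT.
  have muT k : T <= (1 - s) * nu k.
    move: sT; rewrite ler_norml => /andP [_ su].
    have := cnu k; have := nup k; nra.
  move=> k; rewrite /mu; case: (unliftP ord0 k) => [j ->|->] /=.
    by move: (aT j) (muT (lift ord0 j)); rewrite ler_norml => /andP [al _]; lra.
  by rewrite addr0; apply: le_trans (muT ord0).
- rewrite /mu big_split /= -mulr_sumr nus mulr1 big_ord_recl unlift_none /=.
  by under eq_bigr => j _ do rewrite liftK /=; rewrite add0r subrK.
- under eq_bigr => k _ do rewrite /mu scalerDl -scalerA.
  rewrite big_split /= -scaler_sumr nuw scaler0 add0r.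
  rewrite big_ord_recl unlift_none scale0r add0r.
  under eq_bigr => j _ do rewrite liftK /=.
  by rewrite -mul_row_mat mulmxKV.
Qed.

(* Conversely, barycentric coordinates of 0 form a relation, which is a
   nonzero multiple of Cramer's relation, hence has no zero coefficient. *)
Lemma pos_relation_of_interior (w : 'I_n.+1 -> 'rV[R]_n) :
  (forall k, \det (mat (fun r => w (lift k r))) != 0) ->
  zero_in_interior_conv w ->
  exists l : 'I_n.+1 -> R, (forall k, 0 < l k) /\ \sum_k l k *: w k = 0.
Proof.
move=> hdet [eps ep H].
have [l [l0 ls hx]] : in_conv_hull w 0 by apply: H => j; rewrite mxE normr0.
have hk := relation_minor_multiple (hdet ord0) (esym hx).
set a := l ord0 / minor_coef w ord0 in hk.
have an : a != 0.
  apply: contra_eq_neq ls => a0.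
  by rewrite big1 => [|j _]; [rewrite eq_sym oner_neq0 | rewrite hk a0 mul0r].
exists l; split=> // k.
by rewrite lt_def l0 andbT hk mulf_neq0 // minor_coef_neq0.
Qed.

Lemma pos_relation_iff_signs (w : 'I_n.+1 -> 'rV[R]_n) :
  (forall k, \det (mat (fun r => w (lift k r))) != 0) ->
  (exists l : 'I_n.+1 -> R, (forall k, 0 < l k) /\ \sum_k l k *: w k = 0) <->
  (forall k, Num.sg (minor_coef w k) = Num.sg (minor_coef w ord0)).
Proof.
move=> hdet; split.
  case=> l [lp hl] k.
  have hk := relation_minor_multiple (hdet ord0) hl.
  have h1 := lp k; rewrite hk in h1.
  have h2 := lp ord0; rewrite hk in h2.
  set a := l ord0 / minor_coef w ord0 in h1 h2.
  have : Num.sg (a * minor_coef w k) = Num.sg (a * minor_coef w ord0).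
    by rewrite !gtr0_sg.
  rewrite [LHS]sgrM [RHS]sgrM => /mulfI; apply.
  by rewrite sgr_eq0; apply: contraTneq h2 => ->; rewrite mul0r ltxx.
move=> hs; exists (fun k => Num.sg (minor_coef w ord0) * minor_coef w k); split.
  by move=> k; rewrite -(hs k) -normrEsg normr_gt0 minor_coef_neq0.
under eq_bigr => k _ do rewrite -scalerA.
by rewrite -scaler_sumr minor_relation scaler0.
Qed.

End Simplex.

Definition pos_off (R : realFieldType) (n : nat) (v : 'I_n.+2 -> 'rV[R]_n)
    (i : 'I_n.+2) : Prop :=
  exists g : 'I_n.+2 -> R,
    [/\ g i = 0, forall j, j != i -> 0 < g j & \sum_k g k *: v k = 0].

Section Circuit.
Variables (R : realFieldType) (n : nat) (v : 'I_n.+2 -> 'rV[R]_n).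
Hypothesis hs : hereditarily_spanning v.

Lemma det_sub_neq0 (f : 'I_n -> 'I_n.+2) :
  injective f -> \det (mat (fun r => v (f r))) != 0.
Proof. by move=> fi; rewrite -unitfE -unitmxE -row_full_unit; exact: hs. Qed.

Lemma det_drop2_neq0 (i : 'I_n.+2) (k : 'I_n.+1) :
  \det (mat (fun r => v (lift i (lift k r)))) != 0.
Proof. by apply: det_sub_neq0 => a b /lift_inj /lift_inj. Qed.

Lemma relation_two_zeros (c : 'I_n.+2 -> R) (i k : 'I_n.+2) :
  \sum_m c m *: v m = 0 -> i != k -> c i = 0 -> c k = 0 -> forall m, c m = 0.
Proof.
move=> hc ik ci ck.
have [k' hk _] := unlift_some ik.
have ck' : c (lift i k') = 0 by rewrite -hk.
rewrite (sum_drop_zero _ ci) in hc.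
rewrite (@sum_drop_zero R n n (fun r => v (lift i r)) (fun r => c (lift i r)) k' ck') in hc.
have := free_of_det (det_drop2_neq0 i k') hc => h0 m.
case: (unliftP i m) => [m' ->|->] //.
by case: (unliftP k' m') => [r ->|->]; [exact: h0 | rewrite -hk].
Qed.

Lemma interior_iff_pos_off (i : 'I_n.+2) :
  zero_in_interior_conv (fun j => v (lift i j)) <-> pos_off v i.
Proof.
split.
  move/(pos_relation_of_interior (det_drop2_neq0 i)) => [l [lp hl]].
  exists (fun m => oapp l 0 (unlift i m)); split.
  - by rewrite unlift_none.
  - by move=> j; case: (unliftP i j) => [j' ->|->] /=; rewrite ?eqxx.
  - by rewrite sum_extend.
case=> g [gi gp hg].
apply: (@interior_of_pos_relation _ _ _ (fun r => g (lift i r))).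
- exact: det_drop2_neq0.
- by move=> r; apply: gp; rewrite eq_sym neq_lift.
- by rewrite -(sum_drop_zero _ gi).
Qed.

Lemma Sgn_drop_pos (i : 'I_n.+2) : pos_off v i ->
  Sgn (fun j => v (lift i j)) = Num.sg (minor_coef (fun j => v (lift i j)) ord0).
Proof.
move=> hp; rewrite /Sgn; case: excluded_middle_informative => h.
  by rewrite /Or /minor_coef expr0 mul1r.
by case: h; apply/interior_iff_pos_off.
Qed.

Lemma Sgn_drop_npos (i : 'I_n.+2) : ~ pos_off v i -> Sgn (fun j => v (lift i j)) = 0.
Proof.
move=> hp; rewrite /Sgn; case: excluded_middle_informative => h //.
by case: hp; apply/interior_iff_pos_off.
Qed.

Lemma pos_off_signs (i : 'I_n.+2) : pos_off v i ->
  forall k, Num.sg (minor_coef (fun j => v (lift i j)) k) =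
            Num.sg (minor_coef (fun j => v (lift i j)) ord0).
Proof.
move=> hp; apply/(pos_relation_iff_signs (det_drop2_neq0 i)).
case: hp => g [gi gp hg]; exists (fun r => g (lift i r)); split.
  by move=> r; apply: gp; rewrite eq_sym neq_lift.
by rewrite -(sum_drop_zero _ gi).
Qed.

(* Some relation has coefficient 1 at i: rescale Cramer's relation of the
   n+1 vectors other than some v_j with j != i. *)
Lemma relation_one_at (i : 'I_n.+2) :
  exists f : 'I_n.+2 -> R, f i = 1 /\ \sum_m f m *: v m = 0.
Proof.
set j := lift i ord0.
have ji : j != i by rewrite eq_sym neq_lift.
pose F m := oapp (minor_coef (fun r => v (lift j r))) 0 (unlift j m).
have hF : \sum_m F m *: v m = 0 by rewrite sum_extend minor_relation.
have [i' _ hui] := unlift_some ji.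
have Fi : F i != 0.
  by rewrite /F hui /=; apply: minor_coef_neq0; apply: det_drop2_neq0.
exists (fun m => F m / F i); split; first by rewrite divff.
under eq_bigr => m _ do rewrite mulrC -scalerA.
by rewrite -scaler_sumr hF scaler0.
Qed.

(* If P(i) holds then P(k) holds for some k != i: starting from a relation f
   with f_i = 1, add the largest multiple t g of the relation g witnessing P(i)
   keeping f + t g nonnegative; its zero at k is unique by relation_two_zeros. *)
Lemma pos_off_partner (i : 'I_n.+2) : pos_off v i -> exists2 k, k != i & pos_off v k.
Proof.
case=> g [gi gp hg]; have [f [fi hf]] := relation_one_at i.
have ji : lift i ord0 != i by rewrite eq_sym neq_lift.
case: (@arg_maxP _ R _ _ (fun m => m != i) (fun m => - f m / g m) ji) => k ki hk.
set t := - f k / g k in hk.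
pose h m := f m + t * g m.
have hh : \sum_m h m *: v m = 0 by apply: relation_comb.
have hi : h i = 1 by rewrite /h gi mulr0 addr0.
have gk : 0 < g k by apply: gp.
have hk0 : h k = 0 by rewrite /h /t divfK ?gt_eqF // addrN.
have hge m : m != i -> 0 <= h m.
  move=> mi; have gm : 0 < g m by apply: gp.
  have := ler_wpM2r (ltW gm) (hk m mi); rewrite divfK ?gt_eqF // /h; lra.
exists k => //; exists h; split => // m mk.
have [->|mi] := eqVneq m i; first by rewrite hi ltr01.
rewrite lt_def hge // andbT; apply/eqP => hm0.
by have := relation_two_zeros hh mk hm0 hk0 i; rewrite hi => /eqP; rewrite oner_eq0.
Qed.

(* P holds for at most two indices: given witnesses g, d, e of P(i), P(k), P(m)
   with m distinct from i and k, the relation e - al d - be g that vanishes at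
   i and k must vanish identically, yet it is negative at m. *)
Lemma pos_off_at_most_two (i k m : 'I_n.+2) :
  pos_off v i -> pos_off v k -> i != k -> pos_off v m -> m = i \/ m = k.
Proof.
move=> [g [gi gp hg]] [d [dk dp hd]] ik [e [em ep he]].
have [->|mi] := eqVneq m i; first by left.
have [->|mk] := eqVneq m k; first by right.
exfalso.
have di : 0 < d i by apply: dp.
have gk : 0 < g k by apply: gp; rewrite eq_sym.
have ei : 0 < e i by apply: ep; rewrite eq_sym.
have ek : 0 < e k by apply: ep; rewrite eq_sym.
pose al := e i / d i; pose be := e k / g k.
pose e' x := (e x + (- al) * d x) + (- be) * g x.
have he' : \sum_x e' x *: v x = 0 by apply: relation_comb => //; apply: relation_comb.
have e'i : e' i = 0 by rewrite /e' gi mulr0 addr0 /al mulNr divfK ?gt_eqF // addrN.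
have e'k : e' k = 0 by rewrite /e' dk mulr0 addr0 /be mulNr divfK ?gt_eqF // addrN.
have := relation_two_zeros he' ik e'i e'k m; rewrite /e' em add0r !mulNr.
have dm : 0 < d m by apply: dp.
have gm : 0 < g m by apply: gp.
have : 0 < al * d m + be * g m by rewrite addr_gt0 // mulr_gt0 // divr_gt0.
lra.
Qed.

(* For i < k, deleting v_k then v_i (index k-1 among the others) or v_i then
   v_k (index i) gives the same matrix, so the two contributions to dS have
   opposite signs. *)
Lemma pos_off_pair_cancel (i k : 'I_n.+2) :
  (i < k)%N -> pos_off v i -> pos_off v k ->
  (-1) ^+ i * Num.sg (minor_coef (fun j => v (lift i j)) ord0) +
  (-1) ^+ k * Num.sg (minor_coef (fun j => v (lift k j)) ord0) = 0.
Proof.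
move=> ik hpi hpk.
have ik' : i != k by rewrite neq_ltn ik.
have [k' hk _] := unlift_some ik'.
have ki : k != i by rewrite eq_sym.
have [i' hi _] := unlift_some ki.
rewrite -(pos_off_signs hpi k') -(pos_off_signs hpk i').
have vk : (k : nat) = bump i k' by rewrite hk.
have vi : (i : nat) = bump k i' by rewrite hi.
rewrite /bump in vk vi.
have ek : (k : nat) = k'.+1 by lia.
have ei : (i' : nat) = i by lia.
have same : mat (fun r => v (lift i (lift k' r))) = mat (fun r => v (lift k (lift i' r))).
  apply/matrixP => a b; rewrite !mxE; congr (v _ 0 b); apply: val_inj => /=; rewrite /bump.
  by move: ik ek ei; clear; case: i k k' i' a => [i _] [k _] [k' _] [i' _] [a _] /=; lia.
rewrite /minor_coef same !sgrM !sgrX sgrN1 ek ei exprS.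
ring.
Qed.

End Circuit.

Unset Implicit Arguments.
Set Strict Implicit.

Theorem proposition8p1 (R : realFieldType) (n : nat) (v : 'I_n.+2 -> 'rV[R]_n) :
  ~~ odd n -> hereditarily_spanning v -> dS v = 0.
Proof.
move=> _ hs; rewrite /dS.
have [[i hpi]|hnone] := classic (exists i, pos_off v i); last first.
  apply: big1 => i _; rewrite Sgn_drop_npos ?mulr0 // => hp.
  by apply: hnone; exists i.
have [k ki hpk] := pos_off_partner hs hpi.
wlog ik : i k hpi hpk ki / (i < k)%N => [hw|].
  case: (ltngtP i k) => h; first exact: (hw i k).
    by apply: (hw k i) => //; rewrite eq_sym.
  by move: ki; rewrite (val_inj h) eqxx.
rewrite (bigD1 i) // (bigD1 k) //= big1 ?addr0.
  by rewrite !Sgn_drop_pos // pos_off_pair_cancel.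
move=> m /andP [mi mk]; rewrite Sgn_drop_npos ?mulr0 // => hpm.
have ik' : i != k by rewrite eq_sym.
by case: (pos_off_at_most_two hs hpi hpk ik' hpm) => h; move: mi mk; rewrite h eqxx.
Qed.
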